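(* Let $R$ be a commutative ring with unity in which every zero divisor is harmless. If $r\in R$ is a non-zero F-irreducible element, then $r$ is B-irreducible.
   Context: A zero divisor $r$ of $R$ is called harmless if there exists a unit $u\in R$ with $r=1-u$. A non-zero, non-unit element $r\in R$ is called B-irreducible if the principal ideal $(r)$ is a maximal element, with respect to inclusion, of the set of all proper principal ideals of $R$. A factorization of $r$ is an expression $r=a_1\cdots a_n$ with $a_i\in R$; a refinement of this factorization is a factorization obtained by replacing one or more of the factors $a_i$ by a factorization of $a_i$. A non-unit element $r\in R$ is called F-irreducible if every factorization of $r$ has a refinement in which $r$ appears as one of the new factors. *)

From HB Require Import structures.
From mathcomp Require Import all_boot all_order all_algebra.
Set Implicit Arguments. Unset Strict Implicit. Unset Printing Implicit Defensive.
Import GRing.Theory.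
Local Open Scope ring_scope.

Section Defs.
Variable R : comUnitRingType.

Definition zero_divisor (r : R) : Prop := exists s : R, s != 0 /\ r * s = 0.

Definition harmless (r : R) : Prop := exists u : R, u \is a GRing.unit /\ r = 1 - u.

Definition pideal (r : R) : R -> Prop := fun x => exists c : R, x = c * r.

Definition proper_ideal (I : R -> Prop) : Prop := exists x : R, ~ I x.

Definition ideal_sub (I J : R -> Prop) : Prop := forall x, I x -> J x.

Definition B_irreducible (r : R) : Prop :=
  r != 0 /\ r \isn't a GRing.unit /\
  proper_ideal (pideal r) /\
  forall s : R, proper_ideal (pideal s) -> ideal_sub (pideal r) (pideal s) ->
    ideal_sub (pideal s) (pideal r).

Definition factorization (r : R) (a : seq R) : Prop := \prod_(x <- a) x = r.

(* a refinement of the factorization a: each factor a_i is replaced by a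
   factorization fs_i of a_i (possibly the trivial one [:: a_i]); the refined
   factorization is flatten fs. *)
Definition refinement_family (a : seq R) (fs : seq (seq R)) : Prop :=
  size fs = size a /\
  forall i, (i < size a)%N -> factorization (nth 0 a i) (nth [::] fs i).

Definition F_irreducible (r : R) : Prop :=
  r \isn't a GRing.unit /\
  forall a : seq R, factorization r a ->
    exists fs : seq (seq R), refinement_family a fs /\
      exists i, (i < size a)%N /\ r \in nth [::] fs i.

End Defs.

From Pilot Require Import Defs.
From mathcomp Require Import all_boot all_order all_algebra.
Set Implicit Arguments.
Unset Strict Implicit.
Unset Printing Implicit Defensive.

Import GRing.Theory.
Local Open Scope ring_scope.

(* Write r = c s with (r) in (s).  F-irreducibility applied to the
   factorization r = c * s makes r a factor of c or of s.  If r divides s,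
   then (s) = (r).  If c = r d, then r (1 - d s) = 0, so 1 - d s is a zero
   divisor, hence harmless: d s is a unit and (s) is not proper. *)

Section PrincipalIdeals.
Variable R : comUnitRingType.
Implicit Types r s : R.

Lemma pideal_subP r s :
  ideal_sub (pideal r) (pideal s) <-> exists c, r = c * s.
Proof.
split=> [Hsub | [c ->] _ [e ->]]; last by exists (e * c); rewrite mulrA.
by apply: Hsub; exists 1; rewrite mul1r.
Qed.

(* Qualified: all_algebra's ring_quotient also exports a [proper_ideal]. *)
Lemma proper_pidealP s :
  Defs.proper_ideal (pideal s) <-> s \isn't a GRing.unit.
Proof.
split=> [[x Hx] | Hs].
  by apply/negP=> Us; apply: Hx; exists (x / s); rewrite divrK.
exists 1 => -[c Hc]; move/negP: Hs; apply.
by have := unitr1 R; rewrite Hc unitrM => /andP[].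
Qed.

Lemma mem_prod_mulr (l : seq R) r :
  r \in l -> exists d, \prod_(x <- l) x = r * d.
Proof.
move=> Hr; exists (\prod_(x <- rem r l) x).
by rewrite (perm_big _ (perm_to_rem Hr)) big_cons.
Qed.

Lemma F_irreducible_factor2 r c s :
  F_irreducible r -> r = c * s ->
  (exists d, c = r * d) \/ (exists d, s = r * d).
Proof.
case=> _ HF Hrcs.
have Hfac : factorization r [:: c; s] by rewrite /factorization !big_cons big_nil mulr1.
have [fs [[_ Hfam] [i [Hi Hin]]]] := HF _ Hfac.
have [d Hd] := mem_prod_mulr Hin.
have := Hfam i Hi; rewrite /factorization Hd.
by case: i Hi {Hin Hd} => [|[|]] //= _ <-; [left | right]; exists d.
Qed.

Hypothesis harmless_zero_divisors : forall z : R, zero_divisor z -> harmless z.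

(* Here r (1 - a) = 0 with r nonzero, and a = 1 - (1 - a) is the unit. *)
Lemma mulr_fixed_unit r a : r != 0 -> r * a = r -> a \is a GRing.unit.
Proof.
move=> Hr0 Hra.
have [|u [Uu Hu]] := harmless_zero_divisors (z := 1 - a).
  by exists r; rewrite Hr0 mulrC mulrBr mulr1 Hra subrr.
by have -> : a = u by apply: oppr_inj; apply: (@addrI _ 1).
Qed.

End PrincipalIdeals.

Theorem mainTheorem4 (R : comUnitRingType)
  (Hzd : forall z : R, zero_divisor z -> harmless z)
  (r : R) (Hr0 : r != 0) (HF : F_irreducible r) :
  B_irreducible r.
Proof.
have Hnu : r \isn't a GRing.unit by case: HF.
split=> //; split=> //; split; first exact/proper_pidealP.
move=> s /proper_pidealP Hs /pideal_subP [c Hc].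
have [[d Hd] | [d Hd]] := F_irreducible_factor2 HF Hc; last first.
  by apply/pideal_subP; exists d; rewrite Hd mulrC.
have Uds : d * s \is a GRing.unit.
  by apply: (mulr_fixed_unit Hzd Hr0); rewrite mulrA -Hd -Hc.
by move: Uds; rewrite unitrM (negPf Hs) andbF.
Qed.
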